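(* Let $a,b,P_{\max}>0$ and set $\theta=b+b^2P_{\max}$. Define $$Q_{sym}=\frac{\Re\!\left(\sqrt{(a-\theta)(a-\theta+a^2P_{\max})}\right)-\theta}{ab}.$$ If $b\ge \sqrt{1+aP_{\max}}/P_{\max}$, then $Q_{sym}\le 0$. Consequently, in the symmetric two-user channel ($c=a$, $d=b$), both frontier curves $\Phi_1$ and $\Phi_2$ are convex.
   Context: This is the symmetric two-user interference channel with interference treated as noise. The rates are $R_1=\log_2(1+\frac{aP_1}{1+bP_2})$ and $R_2=\log_2(1+\frac{aP_2}{1+bP_1})$, with $P_i\in[0,P_{\max}]$. $\Phi_2$ is the curve of rate pairs with $P_2=P_{\max}$ and $P_1\in[0,P_{\max}]$; $\Phi_1$ is the curve with $P_1=P_{\max}$ and $P_2\in[0,P_{\max}]$. The second derivative of $\Phi_2$ (as $r_2$ versus $r_1$) has the sign of $P_1-Q_{sym}$, and by symmetry the same holds for $\Phi_1$ with $P_2$ in place of $P_1$. $\Re$ denotes the real part. *)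

From Stdlib Require Import Reals.
Open Scope R_scope.

Definition log2 (x : R) : R := ln x / ln 2.

(* Rates of the symmetric two-user interference channel (c = a, d = b),
   interference treated as noise. *)
Definition rate1 (a b P1 P2 : R) : R := log2 (1 + a * P1 / (1 + b * P2)).
Definition rate2 (a b P1 P2 : R) : R := log2 (1 + a * P2 / (1 + b * P1)).

(* Real part of the principal complex square root of a real number x:
   sqrt x if x >= 0, and 0 if x < 0 (purely imaginary root). *)
Definition re_csqrt (x : R) : R := if Rle_dec 0 x then sqrt x else 0.

Definition theta (b Pmax : R) : R := b + b ^ 2 * Pmax.

Definition Qsym (a b Pmax : R) : R :=
  (re_csqrt ((a - theta b Pmax) * (a - theta b Pmax + a ^ 2 * Pmax))
     - theta b Pmax) / (a * b).

(* A parametric curve t |-> (x t, y t), t in [0, Pmax], viewed as the graph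
   of r2 as a function of r1, is convex: whenever the abscissa of the point
   at parameter s is the convex combination (weight l) of the abscissae at
   parameters p and q, its ordinate lies below the chord. *)
Definition convex_curve (x y : R -> R) (Pmax : R) : Prop :=
  forall p q s l : R,
    0 <= p <= Pmax -> 0 <= q <= Pmax -> 0 <= s <= Pmax -> 0 <= l <= 1 ->
    x s = l * x p + (1 - l) * x q ->
    y s <= l * y p + (1 - l) * y q.

Definition Phi2_convex (a b Pmax : R) : Prop :=
  convex_curve (fun P1 => rate1 a b P1 Pmax) (fun P1 => rate2 a b P1 Pmax) Pmax.

Definition Phi1_convex (a b Pmax : R) : Prop :=
  convex_curve (fun P2 => rate1 a b Pmax P2) (fun P2 => rate2 a b Pmax P2) Pmax.

From Stdlib Require Import Reals Lra.
From Coquelicot Require Import Coquelicot.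
Open Scope R_scope.

(* Put c = theta / a = b (1 + b Pmax) / a and D = a Pmax.  In
   natural-log units, the rate u = ln (1 + a t / (1 + b Pmax)) of the user
   whose power t varies satisfies 1 + b t = 1 - c + c e^u, so the rate of the
   user at full power is the function
       G(u) = ln (1 - c + D + c e^u) - ln (1 - c + c e^u)
   of u.  When c >= 1, G is strictly decreasing and its derivative is
   nondecreasing on [0, +oo), hence G is convex there.  The hypothesis on b
   gives b^2 Pmax^2 >= 1 + a Pmax, hence theta > a: this yields c > 1 and, by
   an elementary estimate of the square root, Q_sym <= 0.  Finally Phi_2 is
   the graph of (a rescaling of) G, hence convex, and Phi_1 is the graph of
   the inverse of this decreasing convex function, hence convex as well.
   The file first develops convexity on [0, +oo) in general, then the
   function G, and derives the theorem at the end. *)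

Definition convex_nonneg (f : R -> R) : Prop :=
  forall u v l, 0 <= u -> 0 <= v -> 0 <= l <= 1 ->
    f (l * u + (1 - l) * v) <= l * f u + (1 - l) * f v.

Definition decreasing_nonneg (f : R -> R) : Prop :=
  forall u v, 0 <= u -> u < v -> f v < f u.

Lemma convex_nonneg_of_ordered (f : R -> R) :
  (forall u v l, 0 <= u -> u < v -> 0 < l < 1 ->
     f (l * u + (1 - l) * v) <= l * f u + (1 - l) * f v) ->
  convex_nonneg f.
Proof.
  intros Hord u v l Hu Hv Hl.
  destruct (Req_dec l 0) as [->|Hl0].
  { replace (0 * u + (1 - 0) * v) with v by ring. lra. }
  destruct (Req_dec l 1) as [->|Hl1].
  { replace (1 * u + (1 - 1) * v) with u by ring. lra. }
  destruct (Rtotal_order u v) as [Huv|[<-|Hvu]].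
  - apply Hord; lra.
  - replace (l * u + (1 - l) * u) with u by ring. lra.
  - replace (l * u + (1 - l) * v) with ((1 - l) * v + (1 - (1 - l)) * u) by ring.
    pose proof (Hord v u (1 - l) Hv Hvu ltac:(lra)). lra.
Qed.

(* A function whose derivative is nondecreasing on [0, +oo) is convex there:
   by the mean value theorem on [u, z] and [z, v], the slope of f left of z
   is at most its slope right of z. *)
Lemma convex_of_nondecreasing_derivative (f f' : R -> R) :
  (forall u, 0 <= u -> derivable_pt_lim f u (f' u)) ->
  (forall u v, 0 <= u -> u <= v -> f' u <= f' v) ->
  convex_nonneg f.
Proof.
  intros Hder Hmono. apply convex_nonneg_of_ordered.
  intros u v l Hu Huv Hl. set (z := l * u + (1 - l) * v).
  assert (Huz : u < z) by (unfold z; nra).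
  assert (Hzv : z < v) by (unfold z; nra).
  destruct (MVT_cor2 f f' u z Huz) as [c1 [Eleft Hc1]].
  { intros; apply Hder; lra. }
  destruct (MVT_cor2 f f' z v Hzv) as [c2 [Eright Hc2]].
  { intros; apply Hder; lra. }
  assert (Hslopes : f' c1 <= f' c2) by (apply Hmono; lra).
  replace (z - u) with ((1 - l) * (v - u)) in Eleft by (unfold z; ring).
  replace (v - z) with (l * (v - u)) in Eright by (unfold z; ring).
  assert (Hgap : l * f u + (1 - l) * f v - f z
                 = l * (1 - l) * (v - u) * (f' c2 - f' c1)) by nra.
  assert (0 <= l * (1 - l) * (v - u) * (f' c2 - f' c1)).
  { apply Rmult_le_pos; [|lra]. apply Rmult_le_pos; [|lra]. nra. }
  lra.
Qed.

(* Changing units by a factor k > 0 on both axes preserves convexity and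
   strict decrease; needed to pass from natural logarithms to log2. *)
Lemma convex_nonneg_rescale (g : R -> R) (k : R) :
  0 < k -> convex_nonneg g -> convex_nonneg (fun w => g (k * w) / k).
Proof.
  intros Hk Hg u v l Hu Hv Hl.
  replace (k * (l * u + (1 - l) * v)) with (l * (k * u) + (1 - l) * (k * v)) by ring.
  pose proof (Hg (k * u) (k * v) l ltac:(nra) ltac:(nra) Hl) as Hkuv.
  assert (Hik : 0 < / k) by (apply Rinv_0_lt_compat; lra).
  unfold Rdiv. nra.
Qed.

Lemma decreasing_nonneg_rescale (g : R -> R) (k : R) :
  0 < k -> decreasing_nonneg g -> decreasing_nonneg (fun w => g (k * w) / k).
Proof.
  intros Hk Hg u v Hu Huv.
  pose proof (Hg (k * u) (k * v) ltac:(nra) ltac:(nra)).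
  apply Rmult_lt_compat_r; [apply Rinv_0_lt_compat|]; lra.
Qed.

Lemma convex_curve_graph (x y h : R -> R) (Pmax : R) :
  (forall t, 0 <= t <= Pmax -> 0 <= x t) ->
  (forall t, 0 <= t <= Pmax -> y t = h (x t)) ->
  convex_nonneg h -> convex_curve x y Pmax.
Proof.
  intros Hx Hy Hh p q s l Hp Hq Hs Hl Hxs.
  rewrite (Hy s Hs), (Hy p Hp), (Hy q Hq), Hxs.
  apply Hh; auto.
Qed.

(* If the
   ordinate were above the chord, applying h would put the abscissa strictly
   below the chord of h, contradicting its convexity. *)
Lemma convex_curve_inverse_graph (x y h : R -> R) (Pmax : R) :
  (forall t, 0 <= t <= Pmax -> 0 <= y t) ->
  (forall t, 0 <= t <= Pmax -> x t = h (y t)) ->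
  convex_nonneg h -> decreasing_nonneg h -> convex_curve x y Pmax.
Proof.
  intros Hy Hx Hconv Hdecr p q s l Hp Hq Hs Hl Hxs.
  rewrite (Hx s Hs), (Hx p Hp), (Hx q Hq) in Hxs.
  pose proof (Hy p Hp). pose proof (Hy q Hq).
  set (m := l * y p + (1 - l) * y q).
  destruct (Rle_lt_dec (y s) m) as [Hle|Habove]; [exact Hle|].
  assert (Hm : 0 <= m) by (unfold m; apply Rplus_le_le_0_compat; apply Rmult_le_pos; lra).
  pose proof (Hdecr m (y s) Hm Habove).
  pose proof (Hconv (y p) (y q) l ltac:(lra) ltac:(lra) Hl) as Hchord.
  fold m in Hchord. lra.
Qed.

(* Elementary algebra behind the monotonicity of G': for al <= 0 and D > 0,
   s |-> (s - al)/(s + D) - (s - al)/s = -D (s - al) / (s (s + D)) is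
   nondecreasing on [1, +oo). *)
Lemma slope_term_nondecreasing (s1 s2 al D : R) :
  1 <= s1 <= s2 -> al <= 0 -> 0 < D ->
  (s1 - al) / (s1 + D) - (s1 - al) / s1 <= (s2 - al) / (s2 + D) - (s2 - al) / s2.
Proof.
  intros Hs Hal HD.
  assert (E : (s2 - al) / (s2 + D) - (s2 - al) / s2 - ((s1 - al) / (s1 + D) - (s1 - al) / s1)
     = D * (s2 - s1) * (s1 * s2 - al * (s1 + s2) - al * D)
       * / (s1 * s2 * (s1 + D) * (s2 + D))).
  { field; repeat split; lra. }
  assert (0 <= D * (s2 - s1) * (s1 * s2 - al * (s1 + s2) - al * D)
               * / (s1 * s2 * (s1 + D) * (s2 + D))).
  { apply Rmult_le_pos; [apply Rmult_le_pos; [apply Rmult_le_pos; lra | nra]|].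
    left; apply Rinv_0_lt_compat. repeat apply Rmult_lt_0_compat; lra. }
  lra.
Qed.

Section Frontier.

(* c is the normalized cross gain theta / a and D the received power a Pmax
   of the full-power user. *)
Variables c D : R.
Hypothesis Hc : 1 <= c.
Hypothesis HD : 0 < D.

(* The interference-plus-noise level 1 + b t, as a function of the rate
   u = ln (1 + a t / (1 + b Pmax)) of the other user. *)
Definition interference (u : R) : R := 1 - c + c * exp u.

(* The full-power user's rate, in natural-log units, as a function of u. *)
Definition G (u : R) : R := ln (interference u + D) - ln (interference u).

Definition G' (u : R) : R :=
  c * exp u / (interference u + D) - c * exp u / interference u.

Lemma interference_ge1 (u : R) : 0 <= u -> 1 <= interference u.
Proof.
  intros Hu. pose proof (exp_ineq1_le u). unfold interference. nra.
Qed.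

Lemma interference_increasing (u v : R) : u < v -> interference u < interference v.
Proof.
  intros Huv. pose proof (exp_increasing u v Huv). unfold interference. nra.
Qed.

Lemma G_derivative (u : R) : 0 <= u -> derivable_pt_lim G u (G' u).
Proof.
  intros Hu. pose proof (interference_ge1 u Hu).
  apply is_derive_Reals. unfold G, G', interference in *.
  auto_derive.
  - repeat split; lra.
  - field; lra.
Qed.

Lemma G'_nondecreasing (u v : R) : 0 <= u -> u <= v -> G' u <= G' v.
Proof.
  intros Hu Huv.
  pose proof (interference_ge1 u Hu).
  pose proof (interference_ge1 v ltac:(lra)).
  assert (Hsuv : interference u <= interference v).
  { destruct Huv as [Hlt|<-]; [left; apply interference_increasing|]; lra. }
  assert (Hexp : forall w, c * exp w = interference w - (1 - c))
    by (intros; unfold interference; ring).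
  unfold G'. rewrite !Hexp.
  apply slope_term_nondecreasing; lra.
Qed.

Lemma G_convex : convex_nonneg G.
Proof.
  apply (convex_of_nondecreasing_derivative G G').
  - exact G_derivative.
  - exact G'_nondecreasing.
Qed.

(* G(u) = ln (1 + D / interference u) decreases as the interference grows. *)
Lemma G_decreasing : decreasing_nonneg G.
Proof.
  intros u v Hu Huv.
  pose proof (interference_ge1 u Hu).
  pose proof (interference_increasing u v Huv).
  assert (Hratio : forall w, 0 <= w -> G w = ln (1 + D / interference w)).
  { intros w Hw. pose proof (interference_ge1 w Hw). unfold G.
    rewrite <- ln_div by lra. f_equal. field. lra. }
  rewrite (Hratio u Hu), (Hratio v ltac:(lra)).
  apply ln_increasing.
  - assert (0 < D / interference v) by (apply Rdiv_lt_0_compat; lra). lra.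
  - apply Rplus_lt_compat_l. apply Rmult_lt_compat_l; [lra|].
    apply Rinv_lt_contravar; nra.
Qed.

End Frontier.

Definition frontier (c D w : R) : R := G c D (ln 2 * w) / ln 2.

Lemma ln2_pos : 0 < ln 2.
Proof. pose proof ln_lt_2. lra. Qed.

Lemma frontier_identity (a b Pmax t : R) :
  0 < a -> 0 < b -> 0 < Pmax -> 0 <= t ->
  log2 (1 + a * Pmax / (1 + b * t))
  = frontier (theta b Pmax / a) (a * Pmax) (log2 (1 + a * t / (1 + b * Pmax))).
Proof.
  intros Ha Hb HP Ht. pose proof ln2_pos.
  assert (0 <= a * t / (1 + b * Pmax))
    by (apply Rmult_le_pos; [nra | left; apply Rinv_0_lt_compat; nra]).
  unfold frontier, log2. f_equal.
  replace (ln 2 * (ln (1 + a * t / (1 + b * Pmax)) / ln 2))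
    with (ln (1 + a * t / (1 + b * Pmax))) by (field; lra).
  assert (Hint : interference (theta b Pmax / a) (ln (1 + a * t / (1 + b * Pmax)))
                 = 1 + b * t).
  { unfold interference, theta. rewrite exp_ln by lra. field; split; nra. }
  unfold G. rewrite Hint.
  assert (0 < a * Pmax / (1 + b * t)) by (apply Rdiv_lt_0_compat; nra).
  rewrite <- ln_div by nra. f_equal. field. nra.
Qed.

Lemma log2_nonneg (x : R) : 1 <= x -> 0 <= log2 x.
Proof.
  intros Hx. pose proof ln2_pos. unfold log2.
  apply Rmult_le_pos; [|left; apply Rinv_0_lt_compat; lra].
  rewrite <- ln_1. destruct Hx as [Hlt|<-]; [left; apply ln_increasing|]; lra.
Qed.

Lemma rate_nonneg (a b P t : R) :
  0 < a -> 0 < b -> 0 < P -> 0 <= t -> 0 <= log2 (1 + a * t / (1 + b * P)).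
Proof.
  intros Ha Hb HP Ht. apply log2_nonneg.
  assert (0 <= a * t / (1 + b * P))
    by (apply Rmult_le_pos; [nra | left; apply Rinv_0_lt_compat; nra]).
  lra.
Qed.

(* The hypothesis on b means b^2 Pmax^2 >= 1 + a Pmax, which forces theta > a. *)
Lemma theta_gt_gain (a b Pmax : R) :
  0 < a -> 0 < b -> 0 < Pmax -> b >= sqrt (1 + a * Pmax) / Pmax ->
  a < theta b Pmax.
Proof.
  intros Ha Hb HP Hbig.
  assert (Hroot : sqrt (1 + a * Pmax) <= b * Pmax).
  { apply Rge_le in Hbig. apply (Rmult_le_compat_r Pmax) in Hbig; [|lra].
    unfold Rdiv in Hbig. rewrite Rmult_assoc, Rinv_l in Hbig by lra. lra. }
  pose proof (sqrt_pos (1 + a * Pmax)).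
  pose proof (sqrt_sqrt (1 + a * Pmax) ltac:(nra)).
  assert (Hsq : 1 + a * Pmax <= (b * Pmax) ^ 2) by nra.
  unfold theta. assert (a * Pmax < (b + b ^ 2 * Pmax) * Pmax) by nra. nra.
Qed.

(* When theta >= a the radicand of Q_sym is at most theta^2, so the real part
   of its square root does not exceed theta. *)
Lemma Qsym_nonpos (a b Pmax : R) :
  0 < a -> 0 < b -> 0 < Pmax -> a <= theta b Pmax -> Qsym a b Pmax <= 0.
Proof.
  intros Ha Hb HP Hth. unfold Qsym, re_csqrt. set (th := theta b Pmax) in *.
  assert (Hnum : (if Rle_dec 0 ((a - th) * (a - th + a ^ 2 * Pmax))
                  then sqrt ((a - th) * (a - th + a ^ 2 * Pmax)) else 0) - th <= 0).
  { destruct (Rle_dec _ _) as [Hrad|]; [|lra].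
    assert (Hle : sqrt ((a - th) * (a - th + a ^ 2 * Pmax)) <= sqrt (th ^ 2)).
    { apply sqrt_le_1_alt.
      assert (0 < a ^ 2 * Pmax) by (apply Rmult_lt_0_compat; [apply pow_lt|]; lra).
      assert ((a - th) * (a ^ 2 * Pmax) <= 0) by nra.
      assert ((th - a) * (th - a) <= th * th) by nra. simpl in *; nra. }
    rewrite sqrt_pow2 in Hle by lra. lra. }
  unfold Rdiv. assert (0 < / (a * b)) by (apply Rinv_0_lt_compat; nra). nra.
Qed.

Theorem mainTheorem10 (a b Pmax : R) :
  0 < a -> 0 < b -> 0 < Pmax ->
  b >= sqrt (1 + a * Pmax) / Pmax ->
  Qsym a b Pmax <= 0 /\ Phi1_convex a b Pmax /\ Phi2_convex a b Pmax.
Proof.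
  intros Ha Hb HP Hbig.
  pose proof (theta_gt_gain a b Pmax Ha Hb HP Hbig) as Hth.
  set (c := theta b Pmax / a).
  assert (Hc : 1 <= c).
  { unfold c. apply (Rmult_le_reg_r a); [lra|].
    unfold Rdiv. rewrite Rmult_assoc, Rinv_l by lra. lra. }
  assert (HD : 0 < a * Pmax) by nra.
  pose proof (convex_nonneg_rescale _ _ ln2_pos (G_convex c (a * Pmax) Hc HD))
    as Hconv.
  pose proof (decreasing_nonneg_rescale _ _ ln2_pos (G_decreasing c (a * Pmax) Hc HD))
    as Hdecr.
  split; [|split].
  - apply Qsym_nonpos; lra.
  - apply (convex_curve_inverse_graph _ _ (frontier c (a * Pmax))); auto;
      intros t Ht; unfold rate1, rate2.
    + apply rate_nonneg; lra.
    + apply frontier_identity; lra.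
  - apply (convex_curve_graph _ _ (frontier c (a * Pmax))); auto;
      intros t Ht; unfold rate1, rate2.
    + apply rate_nonneg; lra.
    + apply frontier_identity; lra.
Qed.
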